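(* Let $\mathfrak{g}$ be a $d$-dimensional real Lie algebra and let $\star$ be a star-product on $\mathfrak{g}^{*}$ (in the sense described in the context) satisfying property (P1). For $n\in\mathbb{N}$ let $\mathcal{B}_n=\{p_1,p_2,\ldots,p_{n_d}\}$ be a basis of $\sum_{j=0}^{n}S^j(\mathfrak{g})$ (the polynomials on $\mathfrak{g}^*$ of degree $\le n$) consisting of monomials in $X^1,\ldots,X^d$, ordered by decreasing degree, where $n_d=\dim\sum_{j=0}^n S^j(\mathfrak{g})$. For a monomial $p=X^{i_1}X^{i_2}\cdots X^{i_m}$ put $p^{\star}=X^{i_1}\star X^{i_2}\star\cdots\star X^{i_m}$. Then $\mathcal{B}^{*}_n=\{p_1^{\star},\ldots,p_{n_d}^{\star}\}$ is a spanning set for $\big(\sum_{j=0}^n S^j(\mathfrak{g})\big)[[\epsilon]]$ over $\mathbb{R}[[\epsilon]]$.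
   Context: $\mathfrak{g}$ has basis $X^1,\ldots,X^d$ with structure constants $[X^i,X^j]=c_k^{ij}X^k$ (summation convention); the $X^i$ are simultaneously regarded as linear coordinate functions on $\mathfrak{g}^*\cong\mathbb{R}^d$, so $S(\mathfrak{g})$ is the algebra of polynomial functions on $\mathfrak{g}^*$. The linear Poisson bracket is $\{a,b\}=c_k^{ij}X^k\,\partial_i a\,\partial_j b$. A star-product (deformation quantization) on $\mathfrak{g}^*$ is an $\mathbb{R}[[\epsilon]]$-bilinear product on $C^\infty(\mathfrak{g}^* )[[\epsilon]]$ given by $a\star b=\sum_{j\ge0}\epsilon^j\Pi_j(a,b)$ with $\Pi_j$ bi-differential operators, which is associative, has $\Pi_0(a,b)=ab$, and $\Pi_1(a,b)-\Pi_1(b,a)=\{a,b\}$; polynomials and operators may have coefficients in $\mathbb{R}[[\epsilon]]$. Property (P1): for any polynomials $p_n,q_m$ on $\mathfrak{g}^*$ of degrees $n$ and $m$, $p_n\star q_m=p_nq_m+r_{m+n-1}$ where $r_{m+n-1}$ is a polynomial of degree at most $m+n-1$. *)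

From HB Require Import structures.
From mathcomp Require Import all_boot all_order all_algebra.
From mathcomp Require Import reals derive.
From mathcomp Require Import mpoly.
From mathcomp Require normed_module.

Set Implicit Arguments.
Unset Strict Implicit.
Unset Printing Implicit Defensive.
Import Order.TTheory GRing.Theory Num.Theory.
Import normed_module.numFieldNormedType.Exports.
Local Open Scope ring_scope.

(* Points of g^* = R^d, written in the linear coordinates X^1..X^d. *)
Definition pt (R : realType) (d : nat) := 'I_d -> R.

Definition upd (R : realType) (d : nat) (x : pt R d) (i : 'I_d) (t : R) : pt R d :=
  fun j => if j == i then t else x j.

Definition partial (R : realType) (d : nat) (i : 'I_d) (f : pt R d -> R) : pt R d -> R :=
  fun x => derive1 (fun t => f (upd x i t)) (x i).

Definition iter_partial (R : realType) (d : nat) (s : seq 'I_d) (f : pt R d -> R)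
  : pt R d -> R := foldr (@partial R d) f s.

Definition pcont (R : realType) (d : nat) (f : pt R d -> R) : Prop :=
  forall (x : pt R d) (e : R), 0 < e -> exists2 del : R, 0 < del &
    forall y : pt R d, (forall i, `|y i - x i| < del) -> `|f y - f x| < e.

Definition smooth (R : realType) (d : nat) (f : pt R d -> R) : Prop :=
  forall s : seq 'I_d, pcont (iter_partial s f) /\
    forall (i : 'I_d) (x : pt R d),
      derivable (fun t => iter_partial s f (upd x i t)) (x i) 1.

Definition bidiff (R : realType) (d : nat)
  (P : (pt R d -> R) -> (pt R d -> R) -> (pt R d -> R)) : Prop :=
  exists (N : nat) (c : 'I_N -> pt R d -> R) (s t : 'I_N -> seq 'I_d),
    (forall k, smooth (c k)) /\
    forall a b, smooth a -> smooth b ->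
      P a b = fun x => \sum_(k < N) c k x * iter_partial (s k) a x
                                          * iter_partial (t k) b x.

(* elements of C^infty on g^* [[eps]] : sequence of eps-coefficients *)
Definition series (R : realType) (d : nat) := nat -> pt R d -> R.

(* a * b = sum_j eps^j Pi_j(a,b), extended R[[eps]]-bilinearly *)
Definition star (R : realType) (d : nat)
  (Pi : nat -> (pt R d -> R) -> (pt R d -> R) -> (pt R d -> R))
  (a b : series R d) : series R d :=
  fun k x => \sum_(j < k.+1) \sum_(i < (k - j).+1) Pi j (a i) (b (k - j - i)%N) x.

Definition poisson (R : realType) (d : nat) (c : 'I_d -> 'I_d -> 'I_d -> R)
  (a b : pt R d -> R) : pt R d -> R :=
  fun x => \sum_(i < d) \sum_(j < d) \sum_(k < d)
             c k i j * x k * partial i a x * partial j b x.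

(* c k i j = c_k^{ij}, structure constants of a Lie algebra:
   [X^i, X^j] = c_k^{ij} X^k is antisymmetric and satisfies Jacobi *)
Definition lie_struct (R : realType) (d : nat) (c : 'I_d -> 'I_d -> 'I_d -> R) : Prop :=
  (forall i j k, c k i j = - c k j i) /\
  (forall i j m l, \sum_(k < d) (c k i j * c l k m + c k j m * c l k i
                                 + c k m i * c l k j) = 0).

Definition is_star_product (R : realType) (d : nat) (c : 'I_d -> 'I_d -> 'I_d -> R)
  (Pi : nat -> (pt R d -> R) -> (pt R d -> R) -> (pt R d -> R)) : Prop :=
  [/\ (forall j, bidiff (Pi j)),
      (forall a b, smooth a -> smooth b -> Pi 0%N a b = fun x => a x * b x),
      (forall a b, smooth a -> smooth b ->
         (fun x => Pi 1%N a b x - Pi 1%N b a x) = poisson c a b) &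
      (forall a b e : series R d,
         (forall k, smooth (a k)) -> (forall k, smooth (b k)) ->
         (forall k, smooth (e k)) ->
         star Pi (star Pi a b) e = star Pi a (star Pi b e))].

(* polynomials on g^* with coefficients in R[[eps]]: eps-sequences of
   real polynomials *)
Definition pseries (R : realType) (d : nat) := nat -> mpoly.mpoly d R.

Definition embP (R : realType) (d : nat) (P : pseries R d) : series R d :=
  fun k x => mpoly.meval x (P k).

(* msize p = 1 + total degree of p (0 if p = 0) *)
Definition msz (R : realType) (d : nat) (p : mpoly.mpoly d R) : nat :=
  msize p.

Definition deg_le (R : realType) (d : nat) (P : pseries R d) (n : nat) : Prop :=
  forall k, (msz (P k) <= n.+1)%N.

Definition deg_eq (R : realType) (d : nat) (P : pseries R d) (n : nat) : Prop :=
  deg_le P n /\ exists k, msz (P k) = n.+1.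

Definition mulPS (R : realType) (d : nat) (P Q : pseries R d) : pseries R d :=
  fun k => \sum_(i < k.+1) P i * Q (k - i)%N.

(* Property (P1): p_n * q_m = p_n q_m + r_{m+n-1}, deg r <= m+n-1
   (i.e. msize r <= m+n) *)
Definition P1 (R : realType) (d : nat)
  (Pi : nat -> (pt R d -> R) -> (pt R d -> R) -> (pt R d -> R)) : Prop :=
  forall (n m : nat) (P Q : pseries R d), deg_eq P n -> deg_eq Q m ->
    exists r : pseries R d, (forall k, (msz (r k) <= n + m)%N) /\
      star Pi (embP P) (embP Q) = embP (fun k => mulPS P Q k + r k).

Definition Xs (R : realType) (d : nat) (i : 'I_d) : series R d :=
  fun k x => if k == 0%N then x i else 0.
Definition one (R : realType) (d : nat) : series R d :=
  fun k x => if k == 0%N then 1 else 0.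

(* p^star = X^{i1} * X^{i2} * ... * X^{im} for the word [:: i1; ...; im];
   the empty word (p = 1) gives 1 *)
Fixpoint wordstar (R : realType) (d : nat)
  (Pi : nat -> (pt R d -> R) -> (pt R d -> R) -> (pt R d -> R))
  (w : seq 'I_d) : series R d :=
  match w with
  | [::] => @one R d
  | [:: i] => @Xs R d i
  | i :: w' => star Pi (@Xs R d i) (wordstar Pi w')
  end.

Definition smulS (R : realType) (d : nat) (lam : nat -> R) (a : series R d)
  : series R d :=
  fun k x => \sum_(i < k.+1) lam i * a (k - i)%N x.

(* By (P1) and induction on the length of a word w, the star-monomial w^* is
   the monomial of w plus a series of polynomials of strictly lower degree.
   Hence the family B^*_n is unitriangular, with respect to the degree, over
   the monomial basis of the polynomials of degree at most n, and a polynomial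
   series F of degree at most n is expanded in it from the top degree down:
   subtracting the combination of the w^* weighted by the top-degree
   coefficients of F lowers the degree.  Only (P1) is used. *)
From Pilot Require Import Defs.
From HB Require Import structures.
From mathcomp Require Import all_boot all_order all_algebra.
From mathcomp Require Import reals derive.
From mathcomp Require Import mpoly.
From mathcomp Require normed_module boolp.
Import normed_module.numFieldNormedType.Exports.
Set Implicit Arguments.
Unset Strict Implicit.
Unset Printing Implicit Defensive.
Import Order.TTheory GRing.Theory Num.Theory.
Local Open Scope ring_scope.

Section MsizeBounds.

Variables (R : nzRingType) (n : nat).
Implicit Types (p q : {mpoly R[n]}) (s : nat).

Lemma msize_leq_mcoeff p s :
  (forall m, (s <= mdeg m)%N -> p@_m = 0) -> (msize p <= s)%N.
Proof.
move=> p_hi; rewrite msizeE; apply/bigmax_leqP_seq => m m_supp _.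
rewrite ltnNge; apply/negP => /p_hi pm0.
by move: m_supp; rewrite mcoeff_msupp pm0 eqxx.
Qed.

Lemma mcoeff_msize_leq p s m :
  (msize p <= s)%N -> (s <= mdeg m)%N -> p@_m = 0.
Proof.
move=> p_s s_m; apply/eqP; rewrite mcoeff_eq0; apply: msize_mdeg_ge.
exact: leq_trans s_m.
Qed.

Lemma msize_addl p q : (msize q < msize p)%N -> msize (p + q) = msize p.
Proof.
move=> q_lt; apply/eqP; rewrite eqn_leq; apply/andP; split.
  by apply: leq_trans (msizeD_le _ _) _; rewrite geq_max leqnn ltnW.
have := msizeD_le (p + q) (- q); rewrite addrK msizeN leq_max.
by case/orP => // p_q; move: (leq_trans q_lt p_q); rewrite ltnn.
Qed.

Lemma msize_sum_leq (I : Type) (r : seq I) (P : pred I) (F : I -> {mpoly R[n]}) s :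
  (forall i, P i -> (msize (F i) <= s)%N) -> (msize (\sum_(i <- r | P i) F i) <= s)%N.
Proof.
move=> F_s; apply: (big_ind (fun p => (msize p <= s)%N)) => //; first by rewrite msize0.
by move=> p q p_s q_s; apply: leq_trans (msizeD_le _ _) _; rewrite geq_max p_s q_s.
Qed.

End MsizeBounds.

Section PolynomialSeries.

Variables (R : realType) (d : nat).
Implicit Types (p : {mpoly R[d]}) (P Q : pseries R d) (w : seq 'I_d).

Definition pseriesC p : pseries R d := fun k => if k == 0%N then p else 0.

Definition word_monomial w : {mpoly R[d]} := \prod_(i <- w) mpolyX R (mnm1 i).

Lemma msize_word_monomial w : msize (word_monomial w) = (size w).+1.
Proof.
elim: w => [|i w IHw]; first by rewrite /word_monomial big_nil msize1.
have X_neq0 : mpolyX R (mnm1 i) != 0 by rewrite -msize_poly_eq0 msizeX.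
rewrite /word_monomial big_cons -/(word_monomial w) msizeM //.
  by rewrite msizeX mdeg1 IHw.
by rewrite -msize_poly_eq0 IHw.
Qed.

Lemma size_word_monomial w m :
  word_monomial w = 'X_[m] -> size w = mdeg m.
Proof. by move=> w_m; apply/eqP; rewrite -eqSS -msize_word_monomial w_m msizeX. Qed.

Lemma Xs_pseriesC (i : 'I_d) : Xs i = embP (pseriesC (mpolyX R (mnm1 i))).
Proof.
apply/boolp.funext => k; apply/boolp.funext => x; rewrite /Xs /embP /pseriesC.
by case: (k == 0%N); rewrite ?mevalXU ?meval0.
Qed.

Lemma one_pseriesC : @Defs.one R d = embP (pseriesC 1).
Proof.
apply/boolp.funext => k; apply/boolp.funext => x; rewrite /Defs.one /embP /pseriesC.
by case: (k == 0%N); rewrite ?meval1 ?meval0.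
Qed.

Lemma deg_eq_pseriesCD p Q m :
  msize p = m.+1 -> (forall k, (msize (Q k) <= m)%N) ->
  deg_eq (fun k => pseriesC p k + Q k) m.
Proof.
move=> szp Q_m; split=> [k|].
  apply: leq_trans (msizeD_le _ _) _; rewrite geq_max (leq_trans (Q_m k)) // andbT.
  by case: k => [|k]; rewrite /pseriesC /= ?szp ?msize0.
by exists 0%N; rewrite /msz /pseriesC /= msize_addl szp // ltnS.
Qed.

Lemma deg_eq_pseriesC p m : msize p = m.+1 -> deg_eq (pseriesC p) m.
Proof.
move=> szp; have := @deg_eq_pseriesCD p (fun _ => 0) m szp.
have -> : (fun k => pseriesC p k + 0) = pseriesC p by apply/boolp.funext => k; rewrite addr0.
by apply => k; rewrite msize0.
Qed.

Lemma mulPS_pseriesCl p P k : mulPS (pseriesC p) P k = p * P k.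
Proof.
rewrite /mulPS big_ord_recl /= subn0 big1 ?addr0 // => i _.
by rewrite /pseriesC mul0r.
Qed.

Definition pscale (lam : nat -> R) P : pseries R d :=
  fun k => \sum_(i < k.+1) lam i *: P (k - i)%N.

Lemma pscale0 P k : pscale (fun _ => 0) P k = 0.
Proof. by rewrite /pscale big1 // => i _; rewrite scale0r. Qed.

Lemma pscaleDl (lam mu : nat -> R) P k :
  pscale (fun i => lam i + mu i) P k = pscale lam P k + pscale mu P k.
Proof. by rewrite /pscale -big_split; apply: eq_bigr => i _; rewrite scalerDl. Qed.

Lemma pscale_pseriesCD (lam : nat -> R) p Q k :
  pscale lam (fun j => pseriesC p j + Q j) k = lam k *: p + pscale lam Q k.
Proof.
rewrite /pscale; under eq_bigr => i _ do rewrite scalerDr.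
rewrite big_split /= big_ord_recr /= subnn big1 ?add0r // => i _.
by rewrite /pseriesC subn_eq0 leqNgt ltn_ord scaler0.
Qed.

Lemma smulS_embP (lam : nat -> R) P : smulS lam (embP P) = embP (pscale lam P).
Proof.
apply/boolp.funext => k; apply/boolp.funext => x.
by rewrite /smulS /embP /pscale raddf_sum; apply: eq_bigr => i _ /=; rewrite mevalZ.
Qed.

End PolynomialSeries.

Section StarWords.

Variables (R : realType) (d : nat).
Variable Pi : nat -> (pt R d -> R) -> (pt R d -> R) -> (pt R d -> R).
Hypothesis Pi_P1 : P1 Pi.

Lemma wordstar_leading (w : seq 'I_d) : exists Q : pseries R d,
  (forall k, (msize (Q k) <= size w)%N) /\
  wordstar Pi w = embP (fun k => pseriesC (word_monomial R w) k + Q k).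
Proof.
elim: w => [|i w [Q [Q_w IHw]]].
  exists (fun _ => 0); split=> [k|]; first by rewrite msize0.
  rewrite /= one_pseriesC; congr embP; apply/boolp.funext => k.
  by rewrite addr0 /word_monomial big_nil.
set X := mpolyX R (mnm1 i).
have szX : msize X = 2 by rewrite msizeX mdeg1.
case: w Q_w IHw => [|j w] Q_w IHw.
  exists (fun _ => 0); split=> [k|]; first by rewrite msize0.
  rewrite /= Xs_pseriesC; congr embP; apply/boolp.funext => k.
  by rewrite addr0 /word_monomial big_seq1.
have deg_w : deg_eq (fun k => pseriesC (word_monomial R (j :: w)) k + Q k) (size (j :: w)).
  exact: deg_eq_pseriesCD (msize_word_monomial _ _) Q_w.
have [r [r_sz star_eq]] := Pi_P1 (deg_eq_pseriesC szX) deg_w.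
exists (fun k => X * Q k + r k); split=> [k|].
  apply: leq_trans (msizeD_le _ _) _; rewrite geq_max (leq_trans (r_sz k)) // andbT.
  have [->|Qk_neq0] := eqVneq (Q k) 0; first by rewrite mulr0 msize0.
  by rewrite msizeM ?szX ?ltnS ?Q_w // -msize_poly_eq0 szX.
rewrite [wordstar _ _]/= -/(wordstar Pi (j :: w)) IHw Xs_pseriesC star_eq.
congr embP; apply/boolp.funext => k.
rewrite mulPS_pseriesCl mulrDr addrA /pseriesC /word_monomial [in RHS]big_cons.
by case: (k == 0%N); rewrite ?mulr0.
Qed.

End StarWords.

Section TriangularSpan.

Variables (R : realType) (d n : nat).
Local Notation monomial := (bmultinom d n.+1).

Definition top_coef (s : nat) (p : {mpoly R[d]}) (m : monomial) : R :=
  if mdeg (bmnm m) == s then p@_(bmnm m) else 0.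

Lemma msize_sub_top_part (s : nat) (p : {mpoly R[d]}) :
  (s < n.+1)%N -> (msize p <= s.+1)%N ->
  (msize (p - \sum_m top_coef s p m *: 'X_[bmnm m]) <= s)%N.
Proof.
move=> s_lt p_s; apply: msize_leq_mcoeff => mu s_mu.
rewrite mcoeffB raddf_sum /=.
under eq_bigr => m _ do rewrite mcoeffZ mcoeffX.
have [mu_s|mu_neq_s] := eqVneq (mdeg mu) s.
  have mu_lt : (mdeg mu < n.+1)%N by rewrite mu_s.
  rewrite (bigD1 (BMultinom mu_lt)) //= eqxx mulr1 /top_coef /= mu_s eqxx.
  rewrite big1 ?addr0 ?subrr // => m m_neq.
  case: (bmnm m =P mu) => [m_mu|_]; last by rewrite mulr0.
  by move: m_neq; rewrite -(inj_eq val_inj) /= m_mu eqxx.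
rewrite (mcoeff_msize_leq p_s); last by rewrite ltn_neqAle eq_sym mu_neq_s s_mu.
rewrite big1 ?subrr // => m _; rewrite /top_coef.
case: (mdeg m =P s) => [m_s|_]; last by rewrite mul0r.
case: (bmnm m =P mu) => [m_mu|_]; last by rewrite mulr0.
by move: mu_neq_s; rewrite -m_mu m_s eqxx.
Qed.

Variables B E : monomial -> pseries R d.
Hypothesis B_lead : forall m k, B m k = pseriesC 'X_[bmnm m] k + E m k.
Hypothesis E_lower : forall m k, (msize (E m k) <= mdeg (bmnm m))%N.

Lemma msize_sub_top_combination (s : nat) (F : pseries R d) k :
  (s < n.+1)%N -> (forall i, (msize (F i) <= s.+1)%N) ->
  (msize (F k - \sum_m pscale (fun i => top_coef s (F i) m) (B m) k) <= s)%N.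
Proof.
move=> s_lt F_s; set lam := fun m i => top_coef s (F i) m.
have -> : F k - \sum_m pscale (lam m) (B m) k =
    (F k - \sum_m lam m k *: 'X_[bmnm m]) - \sum_m pscale (lam m) (E m) k.
  have B_eq m : B m = fun j => pseriesC 'X_[bmnm m] j + E m j.
    by apply/boolp.funext => j; rewrite B_lead.
  under eq_bigr => m _ do rewrite B_eq pscale_pseriesCD.
  by rewrite big_split /= opprD addrA.
apply: leq_trans (msizeD_le _ _) _.
rewrite msizeN geq_max msize_sub_top_part //=.
apply: msize_sum_leq => m _; apply: msize_sum_leq => i _.
rewrite /lam /top_coef; case: eqP => [<-|_]; last by rewrite scale0r msize0.
exact: leq_trans (msizeZ_le _ _) (E_lower _ _).
Qed.

Lemma span_triangular (s : nat) (F : pseries R d) :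
  (s <= n.+1)%N -> (forall k, (msize (F k) <= s)%N) ->
  exists lam : monomial -> nat -> R, forall k, F k = \sum_m pscale (lam m) (B m) k.
Proof.
elim: s F => [|s IHs] F s_le F_s.
  exists (fun _ _ => 0) => k.
  have /eqP -> : F k == 0 by rewrite -msize_poly_eq0 -leqn0 F_s.
  by rewrite big1 // => m _; rewrite pscale0.
set top := fun m i => top_coef s (F i) m.
have [lam F_sub] := IHs _ (ltnW s_le) (fun k => msize_sub_top_combination k s_le F_s).
exists (fun m i => top m i + lam m i) => k.
under eq_bigr => m _ do rewrite pscaleDl.
by rewrite big_split /= -F_sub addrC subrK.
Qed.

End TriangularSpan.

Unset Implicit Arguments.
Set Strict Implicit.

Theorem lemma2p1p1 (R : realType) (d : nat) (c : 'I_d -> 'I_d -> 'I_d -> R)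
  (Pi : nat -> (pt R d -> R) -> (pt R d -> R) -> (pt R d -> R)) :
  lie_struct c -> is_star_product c Pi -> P1 Pi ->
  forall (n : nat) (w : mpoly.bmultinom d n.+1 -> seq 'I_d),
    (forall m, \prod_(i <- w m) mpoly.mpolyX R (mpoly.mnm1 i)
                 = mpoly.mpolyX R (mpoly.bmnm m)) ->
    (forall m, exists P : pseries R d, deg_le P n /\ wordstar Pi (w m) = embP P) /\
    (forall F : pseries R d, deg_le F n ->
       exists lam : mpoly.bmultinom d n.+1 -> nat -> R,
         embP F = fun k x => \sum_(m : mpoly.bmultinom d n.+1)
                               smulS (lam m) (wordstar Pi (w m)) k x).
Proof.
move=> _ _ Pi_P1 n w w_mono.
have [E wE] := boolp.choice (fun m => wordstar_leading Pi_P1 (w m)).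
set B := fun m k => pseriesC 'X_[bmnm m] k + E m k.
have wB m : wordstar Pi (w m) = embP (B m).
  by rewrite (proj2 (wE m)) /word_monomial w_mono.
have E_lower m k : (msize (E m k) <= mdeg (bmnm m))%N.
  by rewrite -(size_word_monomial (w_mono m)); apply: (proj1 (wE m)).
split=> [m|F F_n].
  exists (B m); split=> [k|]; last exact: wB.
  exact: leq_trans (proj1 (deg_eq_pseriesCD (msizeX _ _) (E_lower m)) k) (bmdeg m).
have [lam F_eq] := span_triangular (fun m k => erefl (B m k)) E_lower (leqnn _) F_n.
exists lam; apply/boolp.funext => k; apply/boolp.funext => x.
under eq_bigr => m _ do rewrite wB smulS_embP.
by rewrite /embP F_eq raddf_sum.
Qed.
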